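(* Let $D$ be an integral domain, $S$ a multiplicative subset of $D$, and $M$ a torsion-free $D$-module which is a $w$-module. If $M$ is an $S$-SM-module and $\varphi:M\to M$ is a surjective $D$-module homomorphism, then $\varphi$ is an isomorphism.
   Context: Let $K$ be the quotient field of $D$; $I_v=(I^{-1})^{-1}$ with $I^{-1}=\{a\in K\mid aI\subseteq D\}$; $\mathrm{GV}(D)$ is the set of finitely generated ideals $J$ with $J_v=D$. For a torsion-free module $N$, $N_w=\{x\in N\otimes K\mid xJ\subseteq N\text{ for some }J\in\mathrm{GV}(D)\}$; $N$ is a $w$-module if $N_w=N$. A submodule $N$ of $M$ is $S$-$w$-finite if there exist $s\in S$ and a finitely generated submodule $F$ of $M$ with $Ns\subseteq F_w\subseteq N_w$; $M$ is an $S$-SM-module if every $w$-submodule ($L_w=L$) of $M$ is $S$-$w$-finite. *)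

From HB Require Import structures.
From mathcomp Require Import all_boot all_order all_algebra.
From mathcomp Require Import fraction.
Set Implicit Arguments. Unset Strict Implicit. Unset Printing Implicit Defensive.
Import Order.TTheory GRing.Theory Num.Theory.
Local Open Scope ring_scope.

Section Defs.
Variable D : idomainType.
Local Notation K := {fraction D}.
Local Notation inD x := (exists d : D, x = (FracField.tofrac d)).

Definition ideal_span (gs : seq D) (x : D) : Prop :=
  exists rs : seq D, x = \sum_(i < size gs) rs`_i * gs`_i.

Definition frac_inv (I : K -> Prop) (a : K) : Prop :=
  forall i, I i -> inD (a * i).

Definition ideal_in_K (J : D -> Prop) (x : K) : Prop :=
  exists j, J j /\ x = FracField.tofrac j.

Definition v_closure (J : D -> Prop) : K -> Prop :=
  frac_inv (frac_inv (ideal_in_K J)).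

Definition GV (J : D -> Prop) : Prop :=
  (exists gs : seq D, forall x, J x <-> ideal_span gs x) /\
  (forall x : K, v_closure J x <-> inD x).

Definition multiplicative_subset (S : D -> Prop) : Prop :=
  S 1 /\ (forall a b, S a -> S b -> S (a * b)) /\ ~ S 0.

Variable M : lmodType D.

Definition torsion_free : Prop :=
  forall (d : D) (m : M), d *: m = 0 -> d = 0 \/ m = 0.

Definition submodule (N : M -> Prop) : Prop :=
  N 0 /\ (forall x y, N x -> N y -> N (x + y)) /\
  (forall (d : D) x, N x -> N (d *: x)).

Definition span_mod (fs : seq M) (x : M) : Prop :=
  exists rs : seq D, x = \sum_(i < size fs) rs`_i *: fs`_i.

(* For a torsion-free M, elements of M (x) K are the fractions m/d (d != 0),
   with m/d = m'/d' iff d' m = d m'.  For a submodule N, N (x) K is the set of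
   fractions m'/d' with m' in N.  For x = m'/d' and j in D, x j lies in N iff
   j m' = d' n for some n in N.
   [in_w N m d] means: the element m/d of M (x) K lies in N_w. *)
Definition in_w (N : M -> Prop) (m : M) (d : D) : Prop :=
  d != 0 /\
  exists (m' : M) (d' : D), N m' /\ d' != 0 /\ d' *: m = d *: m' /\
    exists J, GV J /\ forall j, J j -> exists n, N n /\ d' *: n = j *: m'.

(* [in_sub N m d] : the element m/d of M (x) K lies in N (i.e. equals n/1). *)
Definition in_sub (N : M -> Prop) (m : M) (d : D) : Prop :=
  exists n, N n /\ d *: n = m.

(* N is a w-submodule: N_w = N (N subset N_w always holds) *)
Definition w_closed (N : M -> Prop) : Prop :=
  forall m d, in_w N m d -> in_sub N m d.

Definition w_module : Prop := w_closed (fun _ => True).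

Definition S_w_finite (S : D -> Prop) (N : M -> Prop) : Prop :=
  exists s, S s /\ exists fs : seq M,
    (forall n, N n -> in_w (span_mod fs) (s *: n) 1) /\
    (forall m d, in_w (span_mod fs) m d -> in_w N m d).

Definition S_SM_module (S : D -> Prop) : Prop :=
  forall L, submodule L -> w_closed L -> S_w_finite S L.

End Defs.

From HB Require Import structures.
From mathcomp Require Import all_boot all_order all_algebra.
From mathcomp Require Import fraction.
Set Implicit Arguments. Unset Strict Implicit. Unset Printing Implicit Defensive.
Import GRing.Theory.
Local Open Scope ring_scope.

(** The generalized kernel L of phi (the union of the kernels of its iterates)
    is a pure submodule of the torsion-free module M, hence a w-submodule.  By
    S-w-finiteness, s L lies in F_w for some finitely generated F contained in
    L, so a single iterate phi^N kills F; every y in L has a nonzero multiple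
    c s y in F, so torsion-freeness gives phi^N y = 0.  If phi x = 0,
    surjectivity gives x = phi^N y with y in L, so x = 0. *)

Lemma inj_surj_bijective (T : choiceType) (U : eqType) (f : T -> U) :
  injective f -> (forall y, exists x, f x = y) -> bijective f.
Proof.
move=> f_inj f_surj.
have f_surjb y : exists x, f x == y by have [x <-] := f_surj y; exists x.
exists (fun y => xchoose (f_surjb y)) => [x|y]; last exact/eqP/(xchooseP (f_surjb y)).
by apply: f_inj; apply/eqP/(xchooseP (f_surjb (f x))).
Qed.

Lemma GV_full (D : idomainType) : GV (fun _ : D => True).
Proof.
split.
  by exists [:: 1] => x; split=> // _; exists [:: x]; rewrite big_ord1 mulr1.
move=> x; split.
  move=> x_v; have [a] : exists a, x * 1 = FracField.tofrac a.
    by apply: x_v => _ [j [_ ->]]; exists j; rewrite mul1r.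
  by rewrite mulr1 => ->; exists a.
move=> [a ->] i i_inv.
have [b] := i_inv (FracField.tofrac 1) (ex_intro _ 1 (conj I erefl)).
by rewrite tofrac1 mulr1 => ->; exists (a * b); rewrite tofracM.
Qed.

Section WSubmodules.
Variables (D : idomainType) (M : lmodType D).

Definition saturated (N : M -> Prop) : Prop :=
  forall (d : D) (x : M), d != 0 -> N (d *: x) -> N x.

Lemma torsion_free_scalerI : torsion_free M ->
  forall d : D, d != 0 -> injective (fun x : M => d *: x).
Proof.
move=> tf d d_neq0 x y dx_dy.
have : d *: (x - y) = 0 by rewrite scalerBr dx_dy subrr.
case/tf=> [d0|/eqP]; first by rewrite d0 eqxx in d_neq0.
by rewrite subr_eq0 => /eqP.
Qed.

Lemma span_mod_submodule (fs : seq M) : submodule (span_mod fs).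
Proof.
split; first by exists [::]; rewrite big1 // => i _; rewrite nth_nil scale0r.
split=> [_ _ [rs ->] [qs ->]|a _ [rs ->]].
  exists (mkseq (fun i => rs`_i + qs`_i) (size fs)); rewrite -big_split.
  by apply: eq_bigr => i _; rewrite nth_mkseq // scalerDl.
exists (mkseq (fun i => a * rs`_i) (size fs)); rewrite scaler_sumr.
by apply: eq_bigr => i _; rewrite nth_mkseq // scalerA.
Qed.

Lemma span_mod_mem (fs : seq M) (f : M) : f \in fs -> span_mod fs f.
Proof.
move=> f_in; have k_lt : (index f fs < size fs)%N by rewrite index_mem.
exists (mkseq (fun i => (i == index f fs)%:R) (size fs)).
rewrite (bigD1 (Ordinal k_lt)) //= nth_mkseq // eqxx scale1r nth_index //.
rewrite big1 ?addr0 // => i /negbTE i_neq_k.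
by rewrite nth_mkseq // -[_ == _]/(i == Ordinal k_lt) i_neq_k scale0r.
Qed.

Lemma in_w_of_mem (N : M -> Prop) (x : M) : submodule N -> N x -> in_w N x 1.
Proof.
move=> [_ [_ N_scale]] Nx; split; first exact: oner_neq0.
exists x, 1; do 2!split=> //; first exact: oner_neq0.
split=> //; exists (fun _ => True); split; first exact: GV_full.
by move=> j _; exists (j *: x); rewrite scale1r; split; first exact: N_scale.
Qed.

Lemma in_w_scale_mem (N : M -> Prop) (m : M) (d : D) :
  submodule N -> in_w N m d -> exists2 c : D, c != 0 & N (c *: m).
Proof.
move=> [_ [_ N_scale]] [_ [m' [d' [Nm' [d'_neq0 [d'm _]]]]]].
by exists d' => //; rewrite d'm; apply: N_scale.
Qed.

Lemma saturated_w_closed (N : M -> Prop) :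
  torsion_free M -> w_module M -> saturated N -> w_closed N.
Proof.
move=> tf wM N_sat m d m_w; have [d_neq0 [m' [d' [Nm' [d'_neq0 [d'm J_m']]]]]] := m_w.
have [n [_ dn]] : in_sub (fun _ => True) m d.
  apply: wM; split=> //; exists m', d'; do 3!split=> //.
  by have [J [GVJ JN]] := J_m'; exists J; split=> // j /JN [x [_ xj]]; exists x.
have d'n : d' *: n = m'.
  by apply: (torsion_free_scalerI tf d_neq0); rewrite /= scalerA mulrC -scalerA dn d'm.
by exists n; split=> //; apply: (N_sat d') => //; rewrite d'n.
Qed.

End WSubmodules.

Section GeneralizedKernel.
Variables (D : idomainType) (M : lmodType D) (phi : {linear M -> M}).

Lemma iter_linear0 n : iter n phi 0 = 0.
Proof. by elim: n => //= n ->; rewrite linear0. Qed.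

Lemma iter_linearD n x y : iter n phi (x + y) = iter n phi x + iter n phi y.
Proof. by elim: n => //= n ->; rewrite linearD. Qed.

Lemma iter_linearZ n (a : D) x : iter n phi (a *: x) = a *: iter n phi x.
Proof. by elim: n => //= n ->; rewrite linearZ. Qed.

Lemma iter_eq0_mono n m x : (n <= m)%N -> iter n phi x = 0 -> iter m phi x = 0.
Proof. by move=> le_nm xn0; rewrite -(subnK le_nm) iterD xn0 iter_linear0. Qed.

Lemma iter_surjective n :
  (forall y, exists x, phi x = y) -> forall y, exists x, iter n phi x = y.
Proof.
move=> phi_surj; elim: n => [|n IHn] y; first by exists y.
by have [y' <-] := phi_surj y; have [x <-] := IHn y'; exists x.
Qed.

Lemma iter_span_eq0 n (fs : seq M) x :
  {in fs, forall f, iter n phi f = 0} -> span_mod fs x -> iter n phi x = 0.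
Proof.
move=> fs0 [rs ->]; apply: (big_ind (fun y => iter n phi y = 0)).
- exact: iter_linear0.
- by move=> y z y0 z0; rewrite iter_linearD y0 z0 addr0.
- by move=> i _; rewrite iter_linearZ fs0 ?mem_nth // scaler0.
Qed.

Definition gen_kernel (x : M) : Prop := exists n, iter n phi x = 0.

Lemma gen_kernel_submodule : submodule gen_kernel.
Proof.
split; first by exists 0%N.
split=> [x y [n xn0] [m ym0]|a x [n xn0]]; last first.
  by exists n; rewrite iter_linearZ xn0 scaler0.
exists (maxn n m); rewrite iter_linearD.
by rewrite (iter_eq0_mono (leq_maxl n m) xn0) (iter_eq0_mono (leq_maxr n m) ym0) addr0.
Qed.

Lemma gen_kernel_uniform (xs : seq M) :
  {in xs, forall x, gen_kernel x} -> exists N, {in xs, forall x, iter N phi x = 0}.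
Proof.
elim: xs => [|x xs IHxs] xs_ker; first by exists 0%N.
have [n xn0] := xs_ker x (mem_head x xs).
have [N xsN0] := IHxs (fun y y_in => xs_ker y (mem_behead (s := x :: xs) y_in)).
exists (maxn n N) => y; rewrite inE => /predU1P [->|y_in].
  exact: iter_eq0_mono (leq_maxl n N) xn0.
exact: iter_eq0_mono (leq_maxr n N) (xsN0 y y_in).
Qed.

Hypothesis tf : torsion_free M.

Lemma iter_kernel_saturated n : saturated (fun x => iter n phi x = 0).
Proof.
move=> d x d_neq0; rewrite iter_linearZ => dx0.
by apply: (torsion_free_scalerI tf d_neq0); rewrite dx0 scaler0.
Qed.

Lemma gen_kernel_saturated : saturated gen_kernel.
Proof. by move=> d x d_neq0 [n dxn0]; exists n; apply: iter_kernel_saturated dxn0. Qed.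

End GeneralizedKernel.

Theorem proposition3p10 (D : idomainType) (S : D -> Prop) (M : lmodType D)
    (phi : {linear M -> M}) :
  multiplicative_subset S ->
  torsion_free M -> w_module M ->
  S_SM_module M S ->
  (forall y : M, exists x : M, phi x = y) ->
  bijective phi.
Proof.
move=> [_ [_ S_neq0]] tf wM SM phi_surj.
have L_sub := gen_kernel_submodule phi.
have L_sat := gen_kernel_saturated (phi := phi) tf.
have [s [Ss [fs [sL_Fw Fw_Lw]]]] := SM _ L_sub (saturated_w_closed tf wM L_sat).
have s_neq0 : s != 0 by apply/eqP => s0; apply: S_neq0; rewrite -s0.
have [N fsN0] : exists N, {in fs, forall f, iter N phi f = 0}.
  apply: gen_kernel_uniform => f f_in.
  have f_Fw := in_w_of_mem (span_mod_submodule fs) (span_mod_mem f_in).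
  by have [c c_neq0] := in_w_scale_mem L_sub (Fw_Lw _ _ f_Fw); apply: L_sat.
have LN0 y : gen_kernel phi y -> iter N phi y = 0.
  move=> /sL_Fw /(in_w_scale_mem (span_mod_submodule fs)) [c c_neq0].
  rewrite scalerA => /(iter_span_eq0 fsN0); apply: iter_kernel_saturated => //.
  by rewrite mulf_neq0.
apply: (inj_surj_bijective _ phi_surj) => x1 x2 phi_x12; apply/eqP; rewrite -subr_eq0.
have [y y_x12] := iter_surjective N phi_surj (x1 - x2).
by rewrite -y_x12 LN0 //; exists N.+1; rewrite iterS y_x12 linearB phi_x12 subrr.
Qed.
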